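(* Fix $i\in\{1,\dots,k\}$ and $\hat a\in[2^n]$. Let $\mathcal{M}(\hat a)=\{m\in\mathcal{M}^{\text{good}}:a_i(m)=\hat a\}$, and suppose $|\{b_i(m):m\in\mathcal{M}(\hat a)\}|=L$. Then there exist $(L-1)\,|\mathcal{M}(\hat a)|$ distinct elements of $\mathcal{B}^{\text{err}}$, each of which the decoder of terminal $t$ maps to some message in $\mathcal{M}(\hat a)$.
   Context: Setting. $\mathcal{N}$ is a directed network containing nodes $s_1,\dots,s_k,t_1,\dots,t_k$. The network $\mathcal{G}$ is obtained from $\mathcal{N}$ by adding new nodes $s,t,A_1,\dots,A_k,B_1,\dots,B_k$ and, for each $i$, the unit-capacity edges $a_i=(s,A_i)$, two parallel edges $x_i,y_i$ from $A_i$ to $B_i$, $z_i=(A_i,s_i)$, $z'_i=(t_i,B_i)$, and $b_i=(B_i,t)$; the incoming edges of $t$ are exactly $b_1,\dots,b_k$. Admissible error patterns $\boldsymbol r=(r_e)$ are those in which at most one edge $e$ has $r_e\neq0$, with $e\notin\{a_1,\dots,a_k,b_1,\dots,b_k\}$. The output of an edge is its input XOR $r_e$. Let $\mathcal{C}$ be a length-$n$ network code on $\mathcal{G}$. The source $s$ has message $m\in[2^{kn}]$, where $[N]=\{1,\dots,N\}$. An edge $e=(u,v)$ of capacity $c_e$ carries a value in $[2^{nc_e}]$ computed from the signals on the incoming edges of $u$ (and from $m$ if $u=s$). The terminal $t$ has a decoder mapping each tuple in $[2^n]^k$ received on $(b_1,\dots,b_k)$ to a message. For an edge $e$, $e(m,\boldsymbol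 r)$ is the signal received on $e$ under message $m$ and error pattern $\boldsymbol r$, and $e(m)=e(m,\boldsymbol 0)$. Write $\boldsymbol b(m)=(b_1(m),\dots,b_k(m))$. Let $\mathcal{M}^{\text{good}}$ be the set of messages $m$ such that $t$ decodes to $m$ under every admissible error pattern when $m$ is sent. Let $\mathcal{B}^{\text{good}}=\{\boldsymbol b(m):m\in\mathcal{M}^{\text{good}}\}$ and $\mathcal{B}^{\text{err}}=[2^n]^k\setminus\mathcal{B}^{\text{good}}$. *)

From mathcomp Require Import all_boot.
Set Implicit Arguments. Unset Strict Implicit. Unset Printing Implicit Defensive.

(* Elements of [2^w] are represented as w-bit vectors; XOR is bitwise. *)
Definition bits (w : nat) := {ffun 'I_w -> bool}.
Definition bxor (w : nat) (u v : bits w) : bits w := [ffun j => u j (+) v j].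
Definition bzero (w : nat) : bits w := [ffun => false].

(* The network G obtained from N by adding s, t, A_i, B_i and the gadget edges
   a_i = (s,A_i), x_i,y_i : A_i -> B_i, z_i = (A_i,s_i), z'_i = (t_i,B_i),
   b_i = (B_i,t).  The nodes of N are exactly the nodes that are not new,
   and the edges of N are exactly the edges that are not gadget edges. *)
Record gadget_net (k : nat) : Type := GadgetNet {
  V : finType;
  E : finType;
  tl : E -> V;
  hd : E -> V;
  cap : E -> nat;
  src : V;
  snk : V;
  nA : 'I_k -> V;
  nB : 'I_k -> V;
  ns : 'I_k -> V;
  nt : 'I_k -> V;
  ea : 'I_k -> E;
  ex : 'I_k -> E;
  ey : 'I_k -> E;
  ez : 'I_k -> E;
  ez' : 'I_k -> E;
  eb : 'I_k -> E
}.

Arguments V {k} _.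
Arguments E {k} _.
Arguments tl {k} _.
Arguments hd {k} _.
Arguments cap {k} _.
Arguments src {k} _.
Arguments snk {k} _.
Arguments nA {k} _.
Arguments nB {k} _.
Arguments ns {k} _.
Arguments nt {k} _.
Arguments ea {k} _.
Arguments ex {k} _.
Arguments ey {k} _.
Arguments ez {k} _.
Arguments ez' {k} _.
Arguments eb {k} _.

Section GadgetDefs.
Variables (k : nat) (G : gadget_net k).

Definition gedge (j : 'I_6) (i : 'I_k) : E G :=
  nth (ea G i) [:: ea G i; ex G i; ey G i; ez G i; ez' G i; eb G i] j.

Definition new_node (v : V G) : bool :=
  [|| v == src G, v == snk G | [exists i, (v == nA G i) || (v == nB G i)]].

Definition gadget_edge (e : E G) : bool := [exists j, exists i, e == gedge j i].

Definition garc : rel (V G) :=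
  fun u v => [exists e, (tl G e == u) && (hd G e == v)].

Definition acyclic : Prop := forall u v, garc u v -> ~~ connect garc v u.

Definition gadget_ok : Prop :=
  (forall i, tl G (ea G i) = src G /\ hd G (ea G i) = nA G i /\
             tl G (ex G i) = nA G i /\ hd G (ex G i) = nB G i /\
             tl G (ey G i) = nA G i /\ hd G (ey G i) = nB G i /\
             tl G (ez G i) = nA G i /\ hd G (ez G i) = ns G i /\
             tl G (ez' G i) = nt G i /\ hd G (ez' G i) = nB G i /\
             tl G (eb G i) = nB G i /\ hd G (eb G i) = snk G) /\
  (forall j i, cap G (gedge j i) = 1) /\
  (forall j1 i1 j2 i2, gedge j1 i1 = gedge j2 i2 -> j1 = j2 /\ i1 = i2) /\
  (src G <> snk G /\ injective (nA G) /\ injective (nB G) /\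
   (forall i, nA G i <> src G /\ nA G i <> snk G /\
              nB G i <> src G /\ nB G i <> snk G) /\
   (forall i j, nA G i <> nB G j)) /\
  (forall i, ~~ new_node (ns G i) /\ ~~ new_node (nt G i)) /\
  (forall e, ~~ gadget_edge e -> ~~ new_node (tl G e) /\ ~~ new_node (hd G e)).

Definition into_t_ok : Prop :=
  forall e, hd G e = snk G <-> exists i, e = eb G i.

End GadgetDefs.

Section CodeDefs.
Variables (k : nat) (G : gadget_net k) (n : nat).

Definition msg := 'I_(2 ^ (k * n)).
Definition sigs := {dffun forall e : E G, bits (n * cap G e)}.
Definition recv := {dffun forall j : 'I_k, bits (n * cap G (eb G j))}.

Record net_code : Type := NetCode {
  enc : forall e : E G, sigs -> msg -> bits (n * cap G e);
  dec : recv -> msg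
}.


Definition code_local (C : net_code) : Prop :=
  forall e (sg1 sg2 : sigs) (m1 m2 : msg),
    (forall e', hd G e' = tl G e -> sg1 e' = sg2 e') ->
    (tl G e = src G -> m1 = m2) ->
    enc C e sg1 m1 = enc C e sg2 m2.

(* sg is the signal assignment e |-> e(m, r): output = input XOR r_e *)
Definition consistent (C : net_code) (m : msg) (r sg : sigs) : Prop :=
  forall e, sg e = bxor (enc C e sg m) (r e).

Definition zero_err : sigs := [ffun e => bzero (n * cap G e)].

Definition admissible (r : sigs) : bool :=
  [exists e0, [forall i, (e0 != ea G i) && (e0 != eb G i)] &&
              [forall e, (e != e0) ==> (r e == bzero (n * cap G e))]].

Definition recv_of (sg : sigs) : recv := [ffun j => sg (eb G j)].

Section Sem.
Variables (C : net_code) (sigf : msg -> sigs -> sigs).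

Definition Mgood : {set msg} :=
  [set m | [forall r, admissible r ==> (dec C (recv_of (sigf m r)) == m)]].

Definition Bgood : {set recv} := [set recv_of (sigf m zero_err) | m in Mgood].
Definition Berr : {set recv} := ~: Bgood.

Definition Mhat (i : 'I_k) (ahat : bits (n * cap G (ea G i))) : {set msg} :=
  [set m in Mgood | sigf m zero_err (ea G i) == ahat].
End Sem.
End CodeDefs.

(* For m, m' in M(ahat), the error z'_i(m) XOR z'_i(m') on z'_i makes z'_i carry
   z'_i(m').  The parallel edges x_i, y_i only see a_i(m) = a_i(m') = ahat and lie
   upstream of z'_i, so b_i then carries b_i(m'), while t still decodes m since m is
   good.  Hence every m in M(ahat) and every one of the L - 1 values b <> b_i(m) of
   b_i on M(ahat) give a received tuple decoding to m with i-th entry b.  These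
   tuples are pairwise distinct, and none of them is b(m'') for a good m'': the
   decoder would return m'' = m, forcing b = b_i(m). *)
From mathcomp Require Import all_boot.
Set Implicit Arguments. Unset Strict Implicit. Unset Printing Implicit Defensive.

Lemma bxor0 w (u : bits w) : bxor u (bzero w) = u.
Proof. by apply/ffunP => j; rewrite !ffunE addbF. Qed.

Lemma bxorK w (u v : bits w) : bxor u (bxor u v) = v.
Proof. by apply/ffunP => j; rewrite !ffunE addKb. Qed.

Section Propagation.
Variables (k n : nat) (G : gadget_net k) (C : net_code G n)
  (sigf : msg k n -> sigs G n -> sigs G n).
Hypothesis Hac : acyclic G.
Hypothesis Hloc : code_local C.
Hypothesis Hcons : forall m r, consistent C m r (sigf m r).

Local Notation z0 := (zero_err G n).
Local Notation arc := (@garc _ G).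

Definition depth (v : V G) := #|[set u | connect arc u v]|.

Lemma depth_lt u v : arc u v -> depth u < depth v.
Proof.
move=> huv; apply: proper_card; apply/properP; split.
- by apply/subsetP => w; rewrite !inE => hw; apply: connect_trans hw (connect1 huv).
- by exists v; rewrite inE ?connect0 //; apply: Hac.
Qed.

Lemma garc_edge e : arc (tl G e) (hd G e).
Proof. by apply/existsP; exists e; rewrite !eqxx. Qed.

Lemma sigf_zero_err m e : sigf m z0 e = enc C e (sigf m z0) m.
Proof. by rewrite (Hcons m z0 e) ffunE bxor0. Qed.

(* Induction on the depth of [tl G e]: the inputs of e are upstream of e0 as well. *)
Lemma sigf_eq_upstream m (r1 r2 : sigs G n) e0 :
  (forall e, e != e0 -> r1 e = r2 e) ->
  forall e, e != e0 -> ~~ connect arc (hd G e0) (tl G e) ->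
  sigf m r1 e = sigf m r2 e.
Proof.
move=> hr e; have [N] := ubnP (depth (tl G e)); elim: N e => // N IH e hN he he0.
rewrite (Hcons m r1 e) (Hcons m r2 e) hr //; congr bxor.
apply: Hloc => // e' he'.
have harc : arc (tl G e') (tl G e) by rewrite -he'; apply: garc_edge.
apply: IH.
- exact: leq_trans (depth_lt harc) hN.
- by apply: contraNneq he0 => ee; rewrite -he' ee connect0.
- by apply: contra he0 => hc; apply: connect_trans hc (connect1 harc).
Qed.

Lemma sigf_eq_into_err m (r1 r2 : sigs G n) e0 :
  (forall e, e != e0 -> r1 e = r2 e) ->
  forall e, hd G e = tl G e0 -> sigf m r1 e = sigf m r2 e.
Proof.
move=> hr e he; apply: sigf_eq_upstream hr _ _ _.
- by apply: contraNneq (Hac (garc_edge e0)) => ee; rewrite -he ee connect0.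
apply: contra (Hac (garc_edge e0)) => hc; apply: connect_trans hc (connect1 _).
by rewrite -he garc_edge.
Qed.

Lemma dec_Mgood m r :
  m \in Mgood C sigf -> admissible r -> dec C (recv_of (sigf m r)) = m.
Proof. by rewrite inE => /forallP /(_ r) /implyP hm /hm /eqP. Qed.

End Propagation.

Section Gadget.
Variables (k : nat) (G : gadget_net k).
Hypothesis HG : gadget_ok G.

Lemma new_node_nA j : new_node (nA G j).
Proof. by apply/or3P; apply: Or33; apply/existsP; exists j; rewrite eqxx. Qed.

Lemma new_node_nB j : new_node (nB G j).
Proof. by apply/or3P; apply: Or33; apply/existsP; exists j; rewrite eqxx orbT. Qed.

Lemma gedge_neq j1 j2 i1 i2 : j1 != j2 -> gedge G j1 i1 != gedge G j2 i2.
Proof. by have [_ [_ [inj _]]] := HG; apply: contraNneq => /inj [->]. Qed.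

Lemma nA_neq_src j : nA G j <> src G.
Proof. by have [_ [_ [_ [[_ [_ [_ [newAB _]]]] _]]]] := HG; case: (newAB j). Qed.

Lemma nB_neq_src j : nB G j <> src G.
Proof. by have [_ [_ [_ [[_ [_ [_ [newAB _]]]] _]]]] := HG; case: (newAB j) => _ [_ []]. Qed.

Lemma ez'_neq_ea i j : ez' G i != ea G j.
Proof. exact: (@gedge_neq (@Ordinal 6 4 isT) (@Ordinal 6 0 isT)). Qed.

Lemma ez'_neq_ex i j : ez' G i != ex G j.
Proof. exact: (@gedge_neq (@Ordinal 6 4 isT) (@Ordinal 6 1 isT)). Qed.

Lemma ez'_neq_ey i j : ez' G i != ey G j.
Proof. exact: (@gedge_neq (@Ordinal 6 4 isT) (@Ordinal 6 2 isT)). Qed.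

Lemma ez'_neq_eb i j : ez' G i != eb G j.
Proof. exact: (@gedge_neq (@Ordinal 6 4 isT) (@Ordinal 6 5 isT)). Qed.

Variant gadget_edge_spec (e : E G) : Prop :=
  | GEdgeA i of e = ea G i
  | GEdgeX i of e = ex G i
  | GEdgeY i of e = ey G i
  | GEdgeZ i of e = ez G i
  | GEdgeZ' i of e = ez' G i
  | GEdgeB i of e = eb G i.

Lemma gadget_edgeP e : gadget_edge e -> gadget_edge_spec e.
Proof.
case/existsP=> [[[|[|[|[|[|[|j]]]]]] hj] /existsP [i /eqP ->]] //;
  by [apply: GEdgeA | apply: GEdgeX | apply: GEdgeY | apply: GEdgeZ | apply: GEdgeZ' | apply: GEdgeB].
Qed.

Lemma hd_eq_nA e j : hd G e = nA G j -> e = ea G j.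
Proof.
have [ends [_ [_ [[_ [injA [_ [newAB nAB]]]] [nsnt nedge]]]]] := HG.
move=> he; case: (boolP (gadget_edge e)) => [/gadget_edgeP|/nedge[_]]; last first.
  by rewrite he new_node_nA.
case=> i ee; rewrite ee in he *;
  have [_ [hA [_ [hX [_ [hY [_ [hZ [_ [hZ' [_ hB]]]]]]]]]]] := ends i.
- by rewrite (injA i j) // -hA.
- by case: (nAB j i); rewrite -hX.
- by case: (nAB j i); rewrite -hY.
- by have [] := nsnt i; rewrite -hZ he new_node_nA.
- by case: (nAB j i); rewrite -hZ'.
- by have [_ [+ _]] := newAB j; rewrite -he hB.
Qed.

Lemma hd_eq_nB e j :
  hd G e = nB G j -> [\/ e = ex G j, e = ey G j | e = ez' G j].
Proof.
have [ends [_ [_ [[_ [_ [injB [newAB nAB]]]] [nsnt nedge]]]]] := HG.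
move=> he; case: (boolP (gadget_edge e)) => [/gadget_edgeP|/nedge[_]]; last first.
  by rewrite he new_node_nB.
case=> i ee; rewrite ee in he *;
  have [_ [hA [_ [hX [_ [hY [_ [hZ [_ [hZ' [_ hB]]]]]]]]]]] := ends i.
- by case: (nAB i j); rewrite -hA.
- by rewrite (injB i j) -?hX //; apply: Or31.
- by rewrite (injB i j) -?hY //; apply: Or32.
- by have [] := nsnt i; rewrite -hZ he new_node_nB.
- by rewrite (injB i j) -?hZ' //; apply: Or33.
- by have [_ [_ [_ +]]] := newAB j; rewrite -he hB.
Qed.
End Gadget.

Section Redirect.
Variables (k n : nat) (G : gadget_net k) (C : net_code G n)
  (sigf : msg k n -> sigs G n -> sigs G n).
Hypothesis HG : gadget_ok G.
Hypothesis Hac : acyclic G.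
Hypothesis Hloc : code_local C.
Hypothesis Hcons : forall m r, consistent C m r (sigf m r).
Variable i : 'I_k.

Local Notation z0 := (zero_err G n).

Lemma admissible_at_ez' (r : sigs G n) :
  (forall e, e != ez' G i -> r e = z0 e) -> admissible r.
Proof.
move=> hr; apply/existsP; exists (ez' G i); apply/andP; split.
  by apply/forallP => j; rewrite ez'_neq_ea ?ez'_neq_eb.
by apply/forallP => e; apply/implyP => /hr ->; rewrite ffunE.
Qed.

Lemma zero_err_admissible : admissible z0.
Proof. exact: admissible_at_ez'. Qed.

Definition redirect_err (m m' : msg k n) : sigs G n :=
  [ffun e => if e == ez' G i then bxor (sigf m z0 e) (sigf m' z0 e)
             else bzero (n * cap G e)].

Lemma redirect_err_off m m' e : e != ez' G i -> redirect_err m m' e = z0 e.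
Proof. by rewrite !ffunE => /negbTE ->. Qed.

Lemma redirect_err_admissible m m' : admissible (redirect_err m m').
Proof. exact/admissible_at_ez'/redirect_err_off. Qed.

Lemma sigf_out_of_nA m m' e :
  sigf m z0 (ea G i) = sigf m' z0 (ea G i) -> tl G e = nA G i ->
  sigf m z0 e = sigf m' z0 e.
Proof.
move=> hA he; rewrite !(sigf_zero_err Hcons); apply: Hloc => [e'|].
  by rewrite he => /hd_eq_nA -> //.
by rewrite he => /nA_neq_src.
Qed.

Lemma sigf_redirect_err_ez' m m' :
  sigf m (redirect_err m m') (ez' G i) = sigf m' z0 (ez' G i).
Proof.
rewrite (Hcons m _ (ez' G i)) [redirect_err _ _ _]ffunE eqxx.
suff -> : enc C (ez' G i) (sigf m (redirect_err m m')) m = sigf m z0 (ez' G i).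
  exact: bxorK.
rewrite (sigf_zero_err Hcons); apply: Hloc => // e'.
by apply: (sigf_eq_into_err Hac Hloc Hcons) => e; apply: redirect_err_off.
Qed.

Lemma sigf_redirect_err_eb m m' :
  sigf m z0 (ea G i) = sigf m' z0 (ea G i) ->
  sigf m (redirect_err m m') (eb G i) = sigf m' z0 (eb G i).
Proof.
move=> hA.
have [_ [_ [tlX [hdX [tlY [hdY [_ [_ [_ [hdZ' [tlB _]]]]]]]]]]] := (proj1 HG) i.
have parallel e : tl G e = nA G i -> hd G e = nB G i -> ez' G i != e ->
    sigf m (redirect_err m m') e = sigf m' z0 e.
  move=> ht hh ne; rewrite (@sigf_eq_upstream _ _ _ _ _ Hac Hloc Hcons m _ z0 (ez' G i)).
  - exact: sigf_out_of_nA.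
  - exact: redirect_err_off.
  - by rewrite eq_sym.
  by rewrite hdZ' ht; apply: Hac; rewrite -ht -hh garc_edge.
rewrite (Hcons m _ (eb G i)) redirect_err_off 1?eq_sym ?ez'_neq_eb // ffunE bxor0.
rewrite (sigf_zero_err Hcons); apply: Hloc => [e'|]; rewrite tlB; last by move/nB_neq_src.
case/(hd_eq_nB HG) => ->.
- by apply: parallel; rewrite ?ez'_neq_ex.
- by apply: parallel; rewrite ?ez'_neq_ey.
exact: sigf_redirect_err_ez'.
Qed.

End Redirect.

Section Forgery.
Variables (k n : nat) (G : gadget_net k) (C : net_code G n)
  (sigf : msg k n -> sigs G n -> sigs G n).
Hypothesis HG : gadget_ok G.
Hypothesis Hac : acyclic G.
Hypothesis Hloc : code_local C.
Hypothesis Hcons : forall m r, consistent C m r (sigf m r).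
Variables (i : 'I_k) (ahat : bits (n * cap G (ea G i))).

Local Notation z0 := (zero_err G n).
Local Notation M := (Mhat C sigf ahat).
Local Notation bi m := (sigf m z0 (eb G i)).
Local Notation bvals := [set bi m | m in M].

Lemma Mhat_ea m : m \in M -> sigf m z0 (ea G i) = ahat.
Proof. by rewrite inE => /andP[_ /eqP]. Qed.

Lemma Mhat_good m : m \in M -> m \in Mgood C sigf.
Proof. by rewrite inE => /andP[]. Qed.

(* Send m, but redirect z'_i to the value it has for a message of M with b_i = b. *)
Definition forged (m : msg k n) (b : bits (n * cap G (eb G i))) : recv G n :=
  recv_of (sigf m (redirect_err sigf i m (odflt m [pick m' in M | bi m' == b]))).

Definition forgery_pairs : {set msg k n * bits (n * cap G (eb G i))} :=
  [set p | (p.1 \in M) && (p.2 \in bvals :\ bi p.1)].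

Lemma in_forgery_pairs p :
  (p \in forgery_pairs) = (p.1 \in M) && (p.2 \in bvals :\ bi p.1).
Proof. exact: in_set. Qed.

Definition forged_recvs : {set recv G n} :=
  [set forged p.1 p.2 | p in forgery_pairs].

Lemma forged_spec m b :
  m \in M -> b \in bvals -> dec C (forged m b) = m /\ forged m b i = b.
Proof.
move=> hm /imsetP [m0 hm0 ->]; rewrite /forged.
case: pickP => [m' /andP [hm' /eqP <-]|/(_ m0)]; last by rewrite hm0 eqxx.
split; first exact: dec_Mgood (Mhat_good hm) (redirect_err_admissible _ HG _ _ _).
by rewrite ffunE (sigf_redirect_err_eb HG Hac Hloc Hcons) // !Mhat_ea.
Qed.

Lemma forged_err m b : m \in M -> b \in bvals :\ bi m -> forged m b \in Berr C sigf.
Proof.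
move=> hm /setD1P [hb /(forged_spec hm) [hdec hi]].
rewrite inE; apply/imsetP => -[m' hm' hy].
have := dec_Mgood hm' (zero_err_admissible n HG i).
by rewrite -hy hdec => em; move: hb; rewrite -hi hy ffunE em eqxx.
Qed.

Lemma card_forged_recvs : #|forged_recvs| = ((#|bvals| - 1) * #|M|)%N.
Proof.
rewrite card_in_imset => [|[m1 b1] [m2 b2]]; last first.
  rewrite !in_forgery_pairs /= => /andP [hm1 /setD1P [_ hb1]] /andP [hm2 /setD1P [_ hb2]] eq12.
  have [d1 i1] := forged_spec hm1 hb1; have [d2 i2] := forged_spec hm2 hb2.
  by congr pair; [rewrite -d1 -d2 eq12 | rewrite -i1 -i2 eq12].
transitivity (\sum_(m in M) \sum_(b in bvals :\ bi m) 1)%N.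
  by rewrite pair_big_dep /= -sum1_card; apply: eq_bigl => p; rewrite in_forgery_pairs.
rewrite (eq_bigr (fun _ => #|bvals| - 1)%N) ?sum_nat_const 1?mulnC // => m hm.
by rewrite sum1_card [in RHS](cardsD1 (bi m)) imset_f // addKn.
Qed.

Lemma forged_recvs_err : forged_recvs \subset Berr C sigf.
Proof.
apply/subsetP => y /imsetP [p]; rewrite in_forgery_pairs => /andP [hm hb] ->.
exact: forged_err.
Qed.

Lemma dec_forged_recvs y : y \in forged_recvs -> dec C y \in M.
Proof.
case/imsetP => p; rewrite in_forgery_pairs => /andP [hm /setD1P [_ hb]] ->.
by rewrite (forged_spec hm hb).1.
Qed.

End Forgery.

Theorem lemma4 (k n : nat) (G : gadget_net k) (C : net_code G n)
    (sigf : msg k n -> sigs G n -> sigs G n) :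
  gadget_ok G -> into_t_ok G -> acyclic G -> code_local C ->
  (forall m r, consistent C m r (sigf m r)) ->
  forall (i : 'I_k) (ahat : bits (n * cap G (ea G i))) (L : nat),
    #|[set sigf m (zero_err G n) (eb G i) | m in Mhat C sigf ahat]| = L ->
    exists S : {set recv G n},
      [/\ #|S| = ((L - 1) * #|Mhat C sigf ahat|)%N,
          S \subset Berr C sigf &
          forall y, y \in S -> dec C y \in Mhat C sigf ahat].
Proof.
move=> HG _ Hac Hloc Hcons i ahat L <-.
exists (forged_recvs C sigf ahat); split.
- exact: card_forged_recvs.
- exact: forged_recvs_err.
- exact: dec_forged_recvs.
Qed.
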